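(* Let $G=(Q,\Sigma,\delta_G,q_0,Q_m)$ be a DFA, $\Sigma_o$ a subset of $\Sigma$, $H=T_{\Sigma_o}(G)$, let $G'$ be a DFA with $G'\sqsubseteq G$, and $H'=T_{\Sigma_o}(G')$. If $match_{\Sigma_o}\leq\rho_{G,G'}$, then for all $s,s'\in L(H)$ with $s\equiv s'\bmod eq(H)$ we have $s\equiv s'\bmod eq(H')$.
   Context: DFA $G$, $L(G)=\{s:\delta_G(q_0,s)\text{ defined}\}$, natural projection $P_{\Sigma_o}$. $\epsilon R_G(q)=\{\delta_G(q,s):P_{\Sigma_o}(s)=\epsilon\}$. The observer $T_{\Sigma_o}(G)$ is the DFA over $\Sigma_o$ with subset states, initial state $\epsilon R_G(q_0)$, transitions $\delta(B,\sigma)=\bigcup_{q\in B,\ \delta_G(q,\sigma)\text{ defined}}\epsilon R_G(\delta_G(q,\sigma))$ (defined iff nonempty), accessible part. $G'\sqsubseteq G$ means $\delta_{G'}(q'_0,s)=\delta_G(q_0,s)$ for all $s\in L(G')$. For a DFA $K$ with initial state $k_0$, $eq(K)$ relates $s,s'$ iff $\delta_K(k_0,s)=\delta_K(k_0,s')$, both being undefined counting as equal. $match_{\Sigma_o}$ on $\Sigma^*$: $(s,s')\in match_{\Sigma_o}$ iff $s\equiv s'\bmod eq(G)$ and $P_{\Sigma_o}(s)\equiv P_{\Sigma_o}(s')\bmod eq(H)$, and if $s\notin L(G)$ then $(s,s')\in match_{\Sigma_o}$ iff $s'\notin L(G)$. $\rho_{G,G'}$ on $\Sigma^*$: $(s,s')\in\rho_{G,G'}$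 iff both lie in $L(G')$, or both lie in $L(G)\setminus L(G')$, or both lie in $\Sigma^*\setminus L(G)$. For binary relations $\rho_1,\rho_2$ on a set $X$, $\rho_1\leq\rho_2$ means $(x,y)\in\rho_1\Rightarrow(x,y)\in\rho_2$ for all $x,y$. *)

From mathcomp Require Import all_boot.
From mathcomp Require Import boolp.
Set Implicit Arguments. Unset Strict Implicit. Unset Printing Implicit Defensive.

Record dfa (Q A : finType) := DFA {
  trans : Q -> A -> option Q;
  init : Q;
  marked : pred Q }.

Section DFA.
Variables (Q A : finType).

Definition deltas (K : dfa Q A) (q : Q) (s : seq A) : option Q :=
  foldl (fun oq a => obind (fun q' => trans K q' a) oq) (Some q) s.

Definition inL (K : dfa Q A) (s : seq A) : Prop := deltas K (init K) s <> None.

(* eq(K): delta(k0,s) = delta(k0,s'), both undefined counting as equal *)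
Definition eqK (K : dfa Q A) (s s' : seq A) : Prop :=
  deltas K (init K) s = deltas K (init K) s'.

Definition subDFA (G' G : dfa Q A) : Prop :=
  forall s, inL G' s -> deltas G' (init G') s = deltas G (init G) s.
End DFA.

Section Observer.
Variables (Q S : finType) (So : {set S}).

Definition obsA := {x : S | x \in So}.

Definition proj (s : seq S) : seq obsA := pmap (fun a => insub a) s.

Definition eR (G : dfa Q S) (q : Q) : {set Q} :=
  [set q' | `[< exists s, proj s = [::] /\ deltas G q s = Some q' >]].

Definition obs_trans (G : dfa Q S) (B : {set Q}) (a : obsA) : option {set Q} :=
  let B' := \bigcup_(q in B)
              match trans G q (val a) with Some q1 => eR G q1 | None => set0 end in
  if B' == set0 then None else Some B'.

(* observer T_{Sigma_o}(G); states are subsets of Q (restricting to the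
   accessible part does not change L or eq) *)
Definition observer (G : dfa Q S) : dfa {set Q} obsA :=
  @DFA _ _ (obs_trans G) (eR G (init G)) (fun B => B :&: [set q | marked G q] != set0).

Definition matchR (G : dfa Q S) (s s' : seq S) : Prop :=
  if `[< inL G s >] then eqK G s s' /\ eqK (observer G) (proj s) (proj s')
  else ~ inL G s'.

Definition rhoR (G G' : dfa Q S) (s s' : seq S) : Prop :=
  (inL G' s /\ inL G' s') \/
  ((inL G s /\ ~ inL G' s) /\ (inL G s' /\ ~ inL G' s')) \/
  (~ inL G s /\ ~ inL G s').

Definition rel_le (X : Type) (r1 r2 : X -> X -> Prop) : Prop :=
  forall x y, r1 x y -> r2 x y.
End Observer.

(** The observer state reached by an observation [t] is the set [observed_states K t]
    of states reached by strings projecting to [t] (the observer is undefined exactly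
    when that set is empty), so [eq(H)] identifies observations with the same such set.
    If [t] and [t'] give the same set in [G] and [G'] reaches [q] by some [u] over [t],
    then [q] is also reached in [G] by some [u'] over [t']; [u] and [u'] are then
    [match]-related, and [match <= rho] with [u] in [L(G')] puts [u'] in [L(G')], where
    it again leads to [q]. Hence the sets of [G'] agree as well. *)

From mathcomp Require Import all_boot.
From mathcomp Require Import boolp.
Set Implicit Arguments. Unset Strict Implicit. Unset Printing Implicit Defensive.

Section Deltas.
Variables (Q A : finType) (K : dfa Q A).

Lemma foldl_trans_None (s : seq A) :
  foldl (fun oq a => obind (fun q' => trans K q' a) oq) None s = None.
Proof. by elim: s. Qed.

Lemma deltas_cat q (u v : seq A) :
  deltas K q (u ++ v) = obind (fun q' => deltas K q' v) (deltas K q u).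
Proof.
rewrite /deltas foldl_cat.
by case: (foldl _ _ u) => [q'|] /=; last exact: foldl_trans_None.
Qed.

Lemma deltas_cons q a (s : seq A) :
  deltas K q (a :: s) = obind (fun q' => deltas K q' s) (trans K q a).
Proof. by rewrite /deltas /=; case: (trans K q a) => //=; exact: foldl_trans_None. Qed.

Lemma deltas_rcons q (s : seq A) a :
  deltas K q (rcons s a) = obind (fun q' => trans K q' a) (deltas K q s).
Proof. by rewrite /deltas foldl_rcons. Qed.

End Deltas.

Section ObservedStates.
Variables (Q S : finType) (So : {set S}).

Definition observed_states (K : dfa Q S) (t : seq (obsA So)) : {set Q} :=
  [set q | `[< exists u, proj So u = t /\ deltas K (init K) u = Some q >]].

Lemma observed_statesP (K : dfa Q S) t q :
  q \in observed_states K t <->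
  exists u, proj So u = t /\ deltas K (init K) u = Some q.
Proof. by rewrite inE; split=> [/asboolP | ?]; last apply/asboolP. Qed.

Lemma proj_cat u v : proj So (u ++ v) = proj So u ++ proj So v.
Proof. exact: pmap_cat. Qed.

Lemma proj_eq_rcons u t a : proj So u = rcons t a ->
  exists u1 b u2, [/\ u = u1 ++ b :: u2, proj So u1 = t, val a = b
                    & proj So u2 = [::]].
Proof.
elim/last_ind: u => [|v b IH]; first by case: t.
rewrite -cats1 proj_cat /=; case: insubP => [a' _ ab | bNSo] /=.
  rewrite !cats1 => /rcons_inj[pv <-].
  by exists v, b, [::]; rewrite cats1 ab; split.
rewrite cats0 => /IH[u1 [b' [u2 [-> pu1 ab' pu2]]]].
exists u1, b', (rcons u2 b); split=> //; first by rewrite -cats1 -catA.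
by rewrite -cats1 proj_cat pu2 /proj /= insubN.
Qed.

Lemma observed_states_nil (K : dfa Q S) :
  observed_states K [::] = eR So K (init K).
Proof. by apply/setP => q; rewrite !inE. Qed.

Lemma observed_states_rcons (K : dfa Q S) t a :
  observed_states K (rcons t a) =
  \bigcup_(q in observed_states K t)
     match trans K q (val a) with Some q1 => eR So K q1 | None => set0 end.
Proof.
apply/setP => q'; apply/idP/bigcupP.
  move=> /observed_statesP[u [/proj_eq_rcons[u1 [b [u2 [-> pu1 <- pu2]]]]]].
  rewrite deltas_cat; case du1: (deltas K (init K) u1) => [q|] //=.
  rewrite deltas_cons; case tq: (trans K q (val a)) => [q1|] //= du2.
  exists q; first by apply/observed_statesP; exists u1.
  by rewrite tq inE; apply/asboolP; exists u2.
move=> [q /observed_statesP[u1 [pu1 du1]]].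
case tq: (trans K q (val a)) => [q1|]; last by rewrite inE.
rewrite inE => /asboolP[u2 [pu2 du2]].
apply/observed_statesP; exists (u1 ++ val a :: u2); split.
  by rewrite proj_cat /= valK /= -/(proj So u2) pu2 pu1 cats1.
by rewrite deltas_cat du1 /= deltas_cons tq.
Qed.

Lemma deltas_observer (K : dfa Q S) t :
  deltas (observer So K) (init (observer So K)) t =
  if observed_states K t == set0 then None else Some (observed_states K t).
Proof.
elim/last_ind: t => [|t a IH].
  rewrite observed_states_nil; case: eqP => // eR0.
  have : init K \in eR So K (init K) by rewrite inE; apply/asboolP; exists [::].
  by rewrite eR0 inE.
rewrite deltas_rcons IH observed_states_rcons.
case: eqP => [-> | _] /=; last by rewrite /obs_trans.
by rewrite big_set0 eqxx.
Qed.

(* Both observers being undefined forces both sets to be empty. *)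
Lemma eqK_observer (K : dfa Q S) t t' :
  eqK (observer So K) t t' <-> observed_states K t = observed_states K t'.
Proof.
rewrite /eqK !deltas_observer; split=> [|->]; last by [].
by do 2!case: eqP => [-> | _] //; case.
Qed.

Variables (G G' : dfa Q S).
Hypotheses (subG'G : subDFA G' G) (match_le_rho : rel_le (matchR So G) (rhoR G G')).

Lemma inL_matchR u u' : inL G' u -> matchR So G u u' -> inL G' u'.
Proof.
move=> G'u /match_le_rho.
have Gu : inL G u by rewrite /inL -subG'G.
by case=> [[] | [[[_ /(_ G'u)] //] | [/(_ Gu)]]].
Qed.

Lemma observed_states_sub t t' :
  observed_states G t = observed_states G t' ->
  observed_states G' t \subset observed_states G' t'.
Proof.
move=> eqGtt'; apply/subsetP => q /observed_statesP[u [pu du]].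
have G'u : inL G' u by rewrite /inL du.
have Gdu : deltas G (init G) u = Some q by rewrite -subG'G.
have /observed_statesP[u' [pu' du']] : q \in observed_states G t'.
  by rewrite -eqGtt'; apply/observed_statesP; exists u.
have u_match_u' : matchR So G u u'.
  rewrite /matchR asboolT; last by rewrite /inL Gdu.
  by split; [rewrite /eqK Gdu du' | apply/eqK_observer; rewrite pu pu'].
have G'u' := inL_matchR G'u u_match_u'.
by apply/observed_statesP; exists u'; rewrite subG'G.
Qed.

End ObservedStates.

Theorem lemma5 (Q S : finType) (G G' : dfa Q S) (So : {set S}) :
  subDFA G' G ->
  rel_le (matchR So G) (rhoR G G') ->
  forall s s' : seq (obsA So),
    inL (observer So G) s -> inL (observer So G) s' ->
    eqK (observer So G) s s' -> eqK (observer So G') s s'.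
Proof.
move=> subG'G match_le_rho s s' _ _ /eqK_observer eqGss'.
apply/eqK_observer/eqP; rewrite eqEsubset.
by rewrite !(observed_states_sub subG'G match_le_rho).
Qed.
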